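(* Let $h$ be the Hahn sequence space, let $\Delta:h\to h$ be the forward difference operator $(\Delta x)_k=x_k-x_{k+1}$, and let $\Delta^*:h^*\to h^*$ be its adjoint. Then $\sigma_r(\Delta,h)=\sigma_p(\Delta^*,h^* )$.
   Context: Sequences are indexed by $\mathbb{N}=\{0,1,2,\dots\}$. The Hahn sequence space is $h=\{x=(x_k):\sum_{k=1}^\infty k|x_k-x_{k+1}|<\infty \text{ and } \lim_{k\to\infty}x_k=0\}$, a Banach space with norm $\|x\|_h=\sum_k k|x_k-x_{k+1}|+\sup_k|x_k|$. $\Delta$ is given by the matrix with $1$ on the main diagonal and $-1$ on the first superdiagonal. $h^*$ is the Banach dual of $h$ and $(\Delta^*f)(x)=f(\Delta x)$. For a bounded operator $T$ on a Banach space $X$: $\sigma_p(T,X)$ is the set of $\alpha\in\mathbb{C}$ with $\alpha I-T$ not injective; the residual spectrum $\sigma_r(T,X)$ is the set of $\alpha\in\mathbb{C}$ such that $\alpha I-T$ is injective but its range $R(\alpha I-T)$ is not dense in $X$. *)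

From Stdlib Require Import Reals.
From Coquelicot Require Import Coquelicot.
Open Scope R_scope.

Definition cseq := nat -> C.

Definition sadd (x y : cseq) : cseq := fun k => Cplus (x k) (y k).
Definition ssub (x y : cseq) : cseq := fun k => Cminus (x k) (y k).
Definition sscal (a : C) (x : cseq) : cseq := fun k => Cmult a (x k).

(* The Hahn sequence space h:
   sum_{k>=1} k |x_k - x_{k+1}| < oo  and  x_k -> 0.
   (The k = 0 term of the series below is 0, so summing from 0 is harmless.) *)
Definition in_hahn (x : cseq) : Prop :=
  ex_series (fun k => INR k * Cmod (Cminus (x k) (x (S k))))
  /\ is_lim_seq (fun k => Cmod (x k)) 0.

Definition hnorm (x : cseq) : R :=
  Series (fun k => INR k * Cmod (Cminus (x k) (x (S k))))
  + real (Sup_seq (fun k => Cmod (x k))).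

Definition Delta (x : cseq) : cseq := fun k => Cminus (x k) (x (S k)).

Definition aImDelta (a : C) (x : cseq) : cseq := ssub (sscal a x) (Delta x).

(* h^*: bounded linear functionals on h (only their values on h matter). *)
Definition in_hdual (f : cseq -> C) : Prop :=
  (forall x y, in_hahn x -> in_hahn y -> f (sadd x y) = Cplus (f x) (f y))
  /\ (forall a x, in_hahn x -> f (sscal a x) = Cmult a (f x))
  /\ (exists M : R, forall x, in_hahn x -> Cmod (f x) <= M * hnorm x).

Definition hdual_eq (f g : cseq -> C) : Prop := forall x, in_hahn x -> f x = g x.

Definition Delta_adj (f : cseq -> C) : cseq -> C := fun x => f (Delta x).

Definition aImDelta_adj (a : C) (f : cseq -> C) : cseq -> C :=
  fun x => Cminus (Cmult a (f x)) (Delta_adj f x).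

Definition injective_on_h (T : cseq -> cseq) : Prop :=
  forall x y, in_hahn x -> in_hahn y -> T x = T y -> x = y.

Definition range_dense_in_h (T : cseq -> cseq) : Prop :=
  forall y, in_hahn y -> forall eps : R, 0 < eps ->
    exists x, in_hahn x /\ hnorm (ssub (T x) y) < eps.

Definition sigma_r_Delta_h (a : C) : Prop :=
  injective_on_h (aImDelta a) /\ ~ range_dense_in_h (aImDelta a).

Definition sigma_p_Delta_adj_hdual (a : C) : Prop :=
  ~ (forall f g, in_hdual f -> in_hdual g ->
       hdual_eq (aImDelta_adj a f) (aImDelta_adj a g) -> hdual_eq f g).

From Pilot Require Import Defs.
From Stdlib Require Import Reals Lra Lia Classical FunctionalExtensionality.
From Coquelicot Require Import Coquelicot.

(* Both sides are empty, because the finitely supported sequences are dense in h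
   (h has the AK property) and are all attained by alpha I - Delta.  Density:
   y - t is finitely supported, where t agrees with y from N on and is
   constantly y_N before, so that t has no differences below N and its h-norm is
   a tail of the series plus sup_(k >= N) |y_k|.  Attainment: the range of
   alpha I - Delta is a subspace containing every unit vector, by induction
   from Delta e_0 = e_0 and Delta e_(n+1) = e_(n+1) - e_n.  The same two
   identities force every eigenvector of Delta^* to vanish on the unit vectors,
   hence, being continuous, on all of h. *)

Definition finitely_supported (z : cseq) : Prop :=
  exists N, forall k, (N <= k)%nat -> z k = RtoC 0.

Definition unit_seq (n : nat) : cseq := fun k => if Nat.eqb k n then RtoC 1 else RtoC 0.

Lemma ex_series_zero : ex_series (fun _ : nat => 0).
Proof.
  exists 0. apply filterlim_ext with (fun _ => 0); [|apply filterlim_const].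
  intros n. rewrite sum_n_const. ring.
Qed.

Lemma Series_ge0 a : ex_series a -> (forall n, 0 <= a n) -> 0 <= Series a.
Proof.
  intros Ha Hp.
  assert (Hzero : Series (fun _ : nat => 0) = 0).
  { rewrite <- (Series_ext (fun n => 0 * a n)) by (intros; ring).
    rewrite Series_scal_l. ring. }
  rewrite <- Hzero. apply Series_le; auto. intros n; split; [lra|auto].
Qed.

Lemma Rle_0_of_le_mult_eps r c :
  0 <= c -> (forall eps, 0 < eps -> r <= c * eps) -> r <= 0.
Proof.
  intros Hc H. apply Rnot_lt_le. intros Hr.
  assert (Heps : 0 < r / (c + 1)) by (apply Rdiv_lt_0_compat; lra).
  specialize (H _ Heps).
  assert (Hlt : c * (r / (c + 1)) < r).
  { apply Rmult_lt_reg_r with (c + 1); [lra|]. field_simplify; nra. }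
  lra.
Qed.

Lemma Cmult_eq0_r c p : c <> RtoC 0 -> Cmult c p = RtoC 0 -> p = RtoC 0.
Proof.
  intros Hc H. destruct (classic (p = RtoC 0)) as [Hp | Hp]; [exact Hp|].
  exfalso. exact (Cmult_neq_0 _ _ Hc Hp H).
Qed.

Lemma in_hahn_finitely_supported z : finitely_supported z -> in_hahn z.
Proof.
  intros [N Hz]. split.
  - apply (ex_series_incr_n _ N).
    apply ex_series_ext with (a := fun _ => 0); [|apply ex_series_zero].
    intros n. rewrite !Hz by lia. unfold Cminus. rewrite Cplus_opp_r, Cmod_0. now rewrite Rmult_0_r.
  - apply (is_lim_seq_incr_n _ N).
    apply is_lim_seq_ext with (u := fun _ => 0); [|apply is_lim_seq_const].
    intros n. rewrite Hz by lia. now rewrite Cmod_0.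
Qed.

Lemma in_hahn_add x y : in_hahn x -> in_hahn y -> in_hahn (sadd x y).
Proof.
  intros [Hx1 Hx2] [Hy1 Hy2]. split.
  - apply (@ex_series_le R_AbsRing R_CompleteNormedModule) with
      (b := fun k => INR k * Cmod (Cminus (x k) (x (S k)))
                     + INR k * Cmod (Cminus (y k) (y (S k)))).
    + intros n. unfold norm; simpl. unfold abs; simpl.
      rewrite Rabs_pos_eq by (apply Rmult_le_pos; [apply pos_INR|apply Cmod_ge_0]).
      rewrite <- Rmult_plus_distr_l. apply Rmult_le_compat_l; [apply pos_INR|].
      unfold sadd.
      replace (Cminus (Cplus (x n) (y n)) (Cplus (x (S n)) (y (S n)))) with
        (Cplus (Cminus (x n) (x (S n))) (Cminus (y n) (y (S n)))) by ring.
      apply Cmod_triangle.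
    + exact (ex_series_plus _ _ Hx1 Hy1).
  - apply is_lim_seq_le_le with (u := fun _ => 0) (w := fun k => Cmod (x k) + Cmod (y k)).
    + intros n. split; [apply Cmod_ge_0|apply Cmod_triangle].
    + apply is_lim_seq_const.
    + replace (Finite 0) with (Finite (0 + 0)) by (f_equal; ring).
      now apply is_lim_seq_plus'.
Qed.

Lemma in_hahn_scal c x : in_hahn x -> in_hahn (sscal c x).
Proof.
  intros [Hx1 Hx2]. split.
  - apply ex_series_ext with (a := fun k => scal (Cmod c) (INR k * Cmod (Cminus (x k) (x (S k))))).
    + intros n. unfold scal; simpl. unfold mult; simpl. unfold sscal.
      replace (Cminus (Cmult c (x n)) (Cmult c (x (S n)))) with (Cmult c (Cminus (x n) (x (S n))))
        by ring.
      rewrite Cmod_mult. ring.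
    + now apply (@ex_series_scal_l R_AbsRing R_NormedModule).
  - apply is_lim_seq_ext with (u := fun k => Cmod c * Cmod (x k)).
    + intros n. unfold sscal. now rewrite Cmod_mult.
    + replace (Finite 0) with (Rbar_mult (Cmod c) 0) by (simpl; f_equal; ring).
      now apply is_lim_seq_scal_l.
Qed.

Lemma ssub_sadd_sscal x y : ssub x y = sadd x (sscal (RtoC (-1)) y).
Proof. apply functional_extensionality; intros k. unfold ssub, sadd, sscal. ring. Qed.

Lemma in_hahn_sub x y : in_hahn x -> in_hahn y -> in_hahn (ssub x y).
Proof.
  intros Hx Hy. rewrite ssub_sadd_sscal. apply in_hahn_add; [exact Hx|]. now apply in_hahn_scal.
Qed.

Lemma hnorm_sscal_opp v : hnorm (sscal (RtoC (-1)) v) = hnorm v.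
Proof.
  assert (Hm : forall c, Cmod (Cmult (RtoC (-1)) c) = Cmod c).
  { intros c. rewrite Cmod_mult, Cmod_R, Rabs_left by lra. ring. }
  unfold hnorm, sscal. f_equal.
  - apply Series_ext; intros k. f_equal. rewrite <- (Hm (Cminus (v k) (v (S k)))). f_equal. ring.
  - f_equal. apply Sup_seq_ext; intros k. now rewrite Hm.
Qed.

Section FinitelySupportedInduction.

Variable P : cseq -> Prop.
Hypothesis P_add : forall x y, P x -> P y -> P (sadd x y).
Hypothesis P_scal : forall c x, P x -> P (sscal c x).
Hypothesis P_unit : forall n, P (unit_seq n).

Lemma finitely_supported_ind z : finitely_supported z -> P z.
Proof.
  intros [N Hz]. revert z Hz. induction N as [|N IH]; intros z Hz.
  - replace z with (sscal (RtoC 0) (unit_seq 0)).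
    + apply P_scal, P_unit.
    + apply functional_extensionality; intros k. unfold sscal. rewrite Hz by lia. ring.
  - set (z' := fun k => if Nat.eqb k N then RtoC 0 else z k).
    replace z with (sadd z' (sscal (z N) (unit_seq N))).
    + apply P_add; [|apply P_scal, P_unit]. apply IH. intros k Hk. unfold z'.
      destruct (Nat.eqb_spec k N); [reflexivity|apply Hz; lia].
    + apply functional_extensionality; intros k. unfold sadd, sscal, z', unit_seq.
      destruct (Nat.eqb_spec k N); [subst; ring|ring].
Qed.

End FinitelySupportedInduction.

Definition tail (y : cseq) (N : nat) : cseq := fun k => if Nat.ltb k N then y N else y k.

Lemma tail_diff y N k :
  Cminus (tail y N k) (tail y N (S k))
  = if Nat.ltb k N then RtoC 0 else Cminus (y k) (y (S k)).
Proof.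
  unfold tail. destruct (Nat.ltb_spec k N), (Nat.ltb_spec (S k) N); try lia.
  - ring.
  - replace (S k) with N by lia. ring.
  - reflexivity.
Qed.

Lemma finitely_supported_sub_tail y N : finitely_supported (ssub y (tail y N)).
Proof.
  exists N. intros k Hk. unfold ssub, tail. destruct (Nat.ltb_spec k N); [lia|ring].
Qed.

Lemma in_hahn_tail y N : in_hahn y -> in_hahn (tail y N).
Proof.
  intros Hy. replace (tail y N) with (ssub y (ssub y (tail y N))).
  - apply in_hahn_sub; [exact Hy|]. apply in_hahn_finitely_supported, finitely_supported_sub_tail.
  - apply functional_extensionality; intros k. unfold ssub. ring.
Qed.

Lemma hnorm_tail_lt y : in_hahn y -> forall eps, 0 < eps ->
  exists N, 0 <= hnorm (tail y N) < eps.
Proof.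
  intros [Hy1 Hy2] eps Heps.
  set (a := fun k => INR k * Cmod (Cminus (y k) (y (S k)))).
  assert (Hapos : forall n, 0 <= a n).
  { intros n; unfold a; apply Rmult_le_pos; [apply pos_INR|apply Cmod_ge_0]. }
  assert (Hs : is_lim_seq (sum_n a) (Series a)) by exact (Series_correct a Hy1).
  apply is_lim_seq_spec in Hs. apply is_lim_seq_spec in Hy2.
  destruct (Hs (mkposreal (eps / 2) ltac:(lra))) as [N1 HN1].
  destruct (Hy2 (mkposreal (eps / 2) ltac:(lra))) as [N2 HN2]. simpl in HN1, HN2.
  set (N := S (max N1 N2)). exists N.
  assert (Hseries : Series (fun k => INR k * Cmod (Cminus (tail y N k) (tail y N (S k))))
                    = Series (fun k => a (N + k)%nat)).
  { rewrite (Series_incr_n_aux _ N).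
    - apply Series_ext; intros n. rewrite tail_diff.
      destruct (Nat.ltb_spec (N + n) N); [lia|reflexivity].
    - intros k Hk. rewrite tail_diff. destruct (Nat.ltb_spec k N); [|lia]. rewrite Cmod_0. ring. }
  assert (Hrest : 0 <= Series (fun k => a (N + k)%nat) < eps / 2).
  { split; [apply Series_ge0; [apply ex_series_incr_n; exact Hy1|auto]|].
    pose proof (Series_incr_n a N ltac:(unfold N; lia) Hy1) as Hincr.
    specialize (HN1 (pred N) ltac:(unfold N; simpl; lia)). rewrite sum_n_Reals in HN1.
    rewrite Rabs_minus_sym in HN1. apply Rabs_def2 in HN1. lra. }
  assert (Hbound : forall k, Cmod (tail y N k) < eps / 2).
  { assert (Hyk : forall k, (N2 <= k)%nat -> Cmod (y k) < eps / 2).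
    { intros k Hk. specialize (HN2 k Hk). now rewrite Rminus_0_r, Rabs_pos_eq in HN2
        by apply Cmod_ge_0. }
    intros k. unfold tail. destruct (Nat.ltb_spec k N); apply Hyk; unfold N in *; lia. }
  assert (Hsup_le : Rbar_le (Sup_seq (fun k => Cmod (tail y N k))) (eps / 2)).
  { apply Rbar_not_lt_le. intros Hlt. apply Sup_seq_minor_lt in Hlt. destruct Hlt as [n Hn].
    simpl in Hn. specialize (Hbound n). lra. }
  assert (Hsup_ge : Rbar_le (Cmod (tail y N 0%nat)) (Sup_seq (fun k => Cmod (tail y N k))))
    by (apply Sup_seq_minor_le with (n := 0%nat); apply Rbar_le_refl).
  unfold hnorm. rewrite Hseries.
  destruct (Sup_seq (fun k => Cmod (tail y N k))) as [r| |]; simpl in Hsup_le, Hsup_ge;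
    try contradiction.
  pose proof (Cmod_ge_0 (tail y N 0%nat)). cbn [real]. lra.
Qed.

(* Plain [Delta] would resolve to the discriminant [R_sqrt.Delta] of Reals. *)
Lemma Delta_unit_0 : Defs.Delta (unit_seq 0) = unit_seq 0.
Proof.
  apply functional_extensionality; intros k. unfold Defs.Delta.
  replace (unit_seq 0 (S k)) with (RtoC 0) by reflexivity. ring.
Qed.

Lemma Delta_unit_S n :
  Defs.Delta (unit_seq (S n)) = sadd (unit_seq (S n)) (sscal (RtoC (-1)) (unit_seq n)).
Proof.
  apply functional_extensionality; intros k. unfold Defs.Delta, sadd, sscal.
  replace (unit_seq (S n) (S k)) with (unit_seq n k) by reflexivity. ring.
Qed.

Lemma in_hahn_unit_seq n : in_hahn (unit_seq n).
Proof.
  apply in_hahn_finitely_supported. exists (S n). intros k Hk. unfold unit_seq.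
  destruct (Nat.eqb_spec k n); [lia|reflexivity].
Qed.

Lemma aImDelta_sadd a x y : aImDelta a (sadd x y) = sadd (aImDelta a x) (aImDelta a y).
Proof.
  apply functional_extensionality; intros k. unfold aImDelta, sadd, ssub, sscal, Defs.Delta. ring.
Qed.

Lemma aImDelta_sscal a c x : aImDelta a (sscal c x) = sscal c (aImDelta a x).
Proof.
  apply functional_extensionality; intros k. unfold aImDelta, ssub, sscal, Defs.Delta. ring.
Qed.

Lemma aImDelta_unit_0 a : aImDelta a (unit_seq 0) = sscal (Cminus a (RtoC 1)) (unit_seq 0).
Proof.
  unfold aImDelta. rewrite Delta_unit_0.
  apply functional_extensionality; intros k. unfold ssub, sscal. ring.
Qed.

Lemma aImDelta_unit_S a n :
  aImDelta a (unit_seq (S n)) = sadd (sscal (Cminus a (RtoC 1)) (unit_seq (S n))) (unit_seq n).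
Proof.
  unfold aImDelta. rewrite Delta_unit_S.
  apply functional_extensionality; intros k. unfold ssub, sadd, sscal. ring.
Qed.

Lemma unit_seq_in_range a n : exists x, in_hahn x /\ aImDelta a x = unit_seq n.
Proof.
  destruct (classic (Cminus a (RtoC 1) = RtoC 0)) as [Ha | Ha].
  - exists (unit_seq (S n)). split; [apply in_hahn_unit_seq|].
    rewrite aImDelta_unit_S, Ha.
    apply functional_extensionality; intros k. unfold sadd, sscal. ring.
  - set (c := Cinv (Cminus a (RtoC 1))).
    induction n as [|n [x [Hx Ex]]].
    + exists (sscal c (unit_seq 0)). split; [apply in_hahn_scal, in_hahn_unit_seq|].
      rewrite aImDelta_sscal, aImDelta_unit_0.
      apply functional_extensionality; intros k. unfold sscal, c. field. exact Ha.
    + exists (sscal c (sadd (unit_seq (S n)) (sscal (RtoC (-1)) x))).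
      split; [apply in_hahn_scal, in_hahn_add, in_hahn_scal; [apply in_hahn_unit_seq|exact Hx]|].
      rewrite aImDelta_sscal, aImDelta_sadd, aImDelta_sscal, aImDelta_unit_S, Ex.
      apply functional_extensionality; intros k. unfold sadd, sscal, c. field. exact Ha.
Qed.

Lemma finitely_supported_in_range a z :
  finitely_supported z -> exists x, in_hahn x /\ aImDelta a x = z.
Proof.
  revert z. apply finitely_supported_ind.
  - intros z1 z2 [x1 [H1 <-]] [x2 [H2 <-]]. exists (sadd x1 x2).
    split; [now apply in_hahn_add|]. apply aImDelta_sadd.
  - intros c z1 [x1 [H1 <-]]. exists (sscal c x1).
    split; [now apply in_hahn_scal|]. apply aImDelta_sscal.
  - apply unit_seq_in_range.
Qed.

Lemma aImDelta_range_dense a : range_dense_in_h (aImDelta a).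
Proof.
  intros y Hy eps Heps.
  destruct (hnorm_tail_lt y Hy eps Heps) as [N HN].
  destruct (finitely_supported_in_range a _ (finitely_supported_sub_tail y N)) as [x [Hx Ex]].
  exists x. split; [exact Hx|].
  replace (ssub (aImDelta a x) y) with (sscal (RtoC (-1)) (tail y N)).
  - rewrite hnorm_sscal_opp. apply HN.
  - rewrite Ex. apply functional_extensionality; intros k. unfold ssub, sscal. ring.
Qed.

Lemma in_hdual_sub f g : in_hdual f -> in_hdual g -> in_hdual (fun x => Cminus (f x) (g x)).
Proof.
  intros [Fa [Fs [Mf HMf]]] [Ga [Gs [Mg HMg]]]. split; [|split].
  - intros x y Hx Hy. rewrite Fa, Ga by assumption. ring.
  - intros c x Hx. rewrite Fs, Gs by assumption. ring.
  - exists (Mf + Mg). intros x Hx. unfold Cminus.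
    eapply Rle_trans; [apply Cmod_triangle|]. rewrite Cmod_opp.
    specialize (HMf x Hx). specialize (HMg x Hx). lra.
Qed.

Lemma in_hdual_eq0_finitely_supported psi :
  in_hdual psi -> (forall n, psi (unit_seq n) = RtoC 0) ->
  forall z, finitely_supported z -> psi z = RtoC 0.
Proof.
  intros [Padd [Pscal _]] Hunit z Hz.
  enough (in_hahn z /\ psi z = RtoC 0) by tauto. revert z Hz. apply finitely_supported_ind.
  - intros x y [Hx Ex] [Hy Ey]. split; [now apply in_hahn_add|].
    rewrite Padd, Ex, Ey by assumption. ring.
  - intros c x [Hx Ex]. split; [now apply in_hahn_scal|]. rewrite Pscal, Ex by assumption. ring.
  - intros n. split; [apply in_hahn_unit_seq|apply Hunit].
Qed.

Lemma in_hdual_eq0_of_unit_seq psi :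
  in_hdual psi -> (forall n, psi (unit_seq n) = RtoC 0) ->
  forall y, in_hahn y -> psi y = RtoC 0.
Proof.
  intros Hpsi Hunit y Hy. pose proof Hpsi as [Padd [_ [M HM]]].
  apply Cmod_eq_0, Rle_antisym; [|apply Cmod_ge_0].
  apply (Rle_0_of_le_mult_eps _ (Rabs M)); [apply Rabs_pos|]. intros eps Heps.
  destruct (hnorm_tail_lt y Hy eps Heps) as [N [Hn0 Hn]].
  assert (Hyt : psi y = psi (tail y N)).
  { replace y with (sadd (ssub y (tail y N)) (tail y N)) at 1
      by (apply functional_extensionality; intros k; unfold sadd, ssub; ring).
    rewrite Padd, (in_hdual_eq0_finitely_supported psi Hpsi Hunit)
      by auto using finitely_supported_sub_tail, in_hahn_tail, in_hahn_finitely_supported.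
    ring. }
  rewrite Hyt. eapply Rle_trans; [apply HM, in_hahn_tail, Hy|].
  pose proof (Rle_abs M). pose proof (Rabs_pos M).
  apply Rle_trans with (Rabs M * hnorm (tail y N)); [nra|].
  apply Rmult_le_compat_l; lra.
Qed.

Lemma Delta_adj_eigen_eq0_unit_seq a psi :
  in_hdual psi -> (forall x, in_hahn x -> Cmult a (psi x) = psi (Defs.Delta x)) ->
  forall n, psi (unit_seq n) = RtoC 0.
Proof.
  intros [Padd [Pscal _]] Heig.
  assert (H0 : Cmult (Cminus a (RtoC 1)) (psi (unit_seq 0)) = RtoC 0).
  { pose proof (Heig _ (in_hahn_unit_seq 0)) as E. rewrite Delta_unit_0 in E.
    replace (Cmult (Cminus a (RtoC 1)) (psi (unit_seq 0)))
      with (Cminus (Cmult a (psi (unit_seq 0))) (psi (unit_seq 0))) by ring.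
    rewrite E. ring. }
  assert (HS : forall n, Cmult (Cminus a (RtoC 1)) (psi (unit_seq (S n)))
                         = Copp (psi (unit_seq n))).
  { intros n. pose proof (Heig _ (in_hahn_unit_seq (S n))) as E.
    rewrite Delta_unit_S, Padd, Pscal in E
      by auto using in_hahn_unit_seq, in_hahn_scal.
    replace (Cmult (Cminus a (RtoC 1)) (psi (unit_seq (S n))))
      with (Cminus (Cmult a (psi (unit_seq (S n)))) (psi (unit_seq (S n)))) by ring.
    rewrite E. ring. }
  destruct (classic (Cminus a (RtoC 1) = RtoC 0)) as [Ha | Ha].
  - intros n. specialize (HS n). rewrite Ha, Cmult_0_l in HS.
    replace (psi (unit_seq n)) with (Copp (Copp (psi (unit_seq n)))) by ring.
    rewrite <- HS. ring.
  - intros n. induction n as [|n IH].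
    + exact (Cmult_eq0_r _ _ Ha H0).
    + apply (Cmult_eq0_r _ _ Ha). rewrite HS, IH. ring.
Qed.

Lemma aImDelta_adj_injective a f g :
  in_hdual f -> in_hdual g -> hdual_eq (aImDelta_adj a f) (aImDelta_adj a g) -> hdual_eq f g.
Proof.
  intros Hf Hg Heq y Hy.
  set (psi := fun x => Cminus (f x) (g x)).
  assert (Heig : forall x, in_hahn x -> Cmult a (psi x) = psi (Defs.Delta x)).
  { intros x Hx. specialize (Heq x Hx). unfold aImDelta_adj, Delta_adj in Heq. unfold psi.
    replace (Cminus (f (Defs.Delta x)) (g (Defs.Delta x))) with
      (Cplus (Cminus (Cmult a (f x)) (Cmult a (g x)))
             (Cminus (Cminus (Cmult a (g x)) (g (Defs.Delta x)))
                     (Cminus (Cmult a (f x)) (f (Defs.Delta x))))) by ring.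
    rewrite Heq. ring. }
  assert (Hpsi : psi y = RtoC 0).
  { apply (in_hdual_eq0_of_unit_seq psi (in_hdual_sub f g Hf Hg)); [|exact Hy].
    exact (Delta_adj_eigen_eq0_unit_seq a psi (in_hdual_sub f g Hf Hg) Heig). }
  unfold psi in Hpsi. rewrite <- (Cplus_0_l (g y)), <- Hpsi. ring.
Qed.

Theorem theorem4p5 :
  forall a : C, sigma_r_Delta_h a <-> sigma_p_Delta_adj_hdual a.
Proof.
  intros a. split.
  - intros [_ Hnot_dense]. exfalso. exact (Hnot_dense (aImDelta_range_dense a)).
  - intros Hnot_inj. exfalso. exact (Hnot_inj (aImDelta_adj_injective a)).
Qed.
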